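(* Let $0<p<1$, $q=0$ and $0<\theta<1$. Let \[ m_{\mathrm{COMP}}=\min_{\alpha,d}\max\left\{\frac{\theta}{1-\theta}\frac{1}{d\,D_{\mathrm{KL}}(\alpha\|0)},\ \frac{1}{1-\theta}\frac{1}{d\,D_{\mathrm{KL}}(\alpha\|e^{-d}(1-p))}\right\}k\log(n/k), \] the minimum over $d>0$ and $\alpha\in(0,e^{-d}(1-p))$, and with $w=e^{-d}p+1-e^{-d}$, \[ m_{\mathrm{DD}}=\min_{\alpha,\beta,d}\max\{c_1(\alpha,d),c_2(\alpha,d),c_3(\beta,d),c_4(\alpha,\beta,d)\}\,k\log(n/k), \] the minimum over $d>0$, $\alpha\in(0,e^{-d}(1-p))$, $\beta\in(0,e^{-d})$, where $c_1(\alpha,d)=\frac{\theta}{1-\theta}\frac{1}{d\,D_{\mathrm{KL}}(\alpha\|0)}$, $c_2(\alpha,d)=\frac{1}{d\,D_{\mathrm{KL}}(\alpha\|1-w)}$, $c_3(\beta,d)=\frac{\theta}{1-\theta}\frac{1}{d\,D_{\mathrm{KL}}(\beta\|e^{-d})}$ and \[ c_4(\alpha,\beta,d)=\max_{1-\alpha\le z\le1}\left\{\frac{1}{1-\theta}\frac{1}{d\Big(D_{\mathrm{KL}}(z\|w)+\mathbf 1\big\{\beta>\tfrac{ze^{-d}p}{w}\big\}\,z\,D_{\mathrm{KL}}\big(\tfrac\beta z\,\big\|\,\tfrac{e^{-d}p}{w}\big)\Big)}\right\}. \] Then $m_{\mathrm{COMP}}\ge m_{\mathrm{DD}}$.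
   Context: $\log$ is the natural logarithm; $D_{\mathrm{KL}}(r\|s)=r\log(r/s)+(1-r)\log\frac{1-r}{1-s}$, extended by continuity (possibly to $+\infty$) at $r$ or $s\in\{0,1\}$; $1/\infty$ is read as $0$; $\mathbf 1\{\cdot\}$ is the indicator function; $n,k$ are positive integers with $k<n$. (These quantities are the test-number bounds for noisy COMP and noisy DD with constant-column design on the reverse Z channel, i.e. false-positive probability $p$ and false-negative probability $q=0$.) *)

From HB Require Import structures.
From mathcomp Require Import all_boot all_order all_algebra.
From mathcomp Require Import all_classical all_reals all_analysis.
Set Implicit Arguments. Unset Strict Implicit. Unset Printing Implicit Defensive.
Import Order.TTheory GRing.Theory Num.Theory.
Local Open Scope ring_scope.
Local Open Scope classical_set_scope.

Section Defs.
Variable R : realType.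

(* a * log(a/b), extended by continuity: 0 log(0/b) = 0, a log(a/0) = +oo (a>0) *)
Definition xlogxy (a b : R) : \bar R :=
  if a == 0 then 0%E
  else if b == 0 then +oo%E
  else (a * ln (a / b))%:E.

(* Binary KL divergence D_KL(r || s) with values in \bar R.
   Outside [0,1]^2 (where it is undefined) we use the convention +oo. *)
Definition DKL (r s : R) : \bar R :=
  if (0 <= r <= 1) && (0 <= s <= 1) then (xlogxy r s + xlogxy (1 - r) (1 - s))%E
  else +oo%E.

Definition erecip (x : \bar R) : \bar R :=
  match x with
  | r%:E => if r == 0 then +oo%E else (r^-1)%:E
  | +oo%E => 0%E
  | -oo%E => 0%E
  end.

Definition indic (b : bool) : R := if b then 1 else 0.

Definition comp_obj (p theta alpha d : R) : \bar R :=
  maxe ((theta / (1 - theta))%:E * erecip (d%:E * DKL alpha 0))%E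
       ((1 / (1 - theta))%:E * erecip (d%:E * DKL alpha (expR (- d) * (1 - p))))%E.

Definition m_COMP (n k : nat) (p theta : R) : \bar R :=
  (ereal_inf [set x | exists alpha d : R, (0 < d)%R /\ (0 < alpha)%R /\
      (alpha < expR (- d) * (1 - p))%R /\ x = comp_obj p theta alpha d]
   * (k%:R * ln (n%:R / k%:R))%:E)%E.

Definition wDD (p d : R) : R := expR (- d) * p + 1 - expR (- d).

Definition c1 (theta alpha d : R) : \bar R :=
  ((theta / (1 - theta))%:E * erecip (d%:E * DKL alpha 0))%E.
Definition c2 (p alpha d : R) : \bar R :=
  erecip (d%:E * DKL alpha (1 - wDD p d))%E.
Definition c3 (theta beta d : R) : \bar R :=
  ((theta / (1 - theta))%:E * erecip (d%:E * DKL beta (expR (- d))))%E.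
Definition c4 (p theta alpha beta d : R) : \bar R :=
  ereal_sup [set y | exists z : R, (1 - alpha <= z <= 1)%R /\
     y = ((1 / (1 - theta))%:E *
          erecip (d%:E * (DKL z (wDD p d) +
             (indic (beta > z * expR (- d) * p / wDD p d) * z)%:E *
             DKL (beta / z) (expR (- d) * p / wDD p d))))%E].

Definition dd_obj (p theta alpha beta d : R) : \bar R :=
  maxe (maxe (c1 theta alpha d) (c2 p alpha d))
       (maxe (c3 theta beta d) (c4 p theta alpha beta d)).

Definition m_DD (n k : nat) (p theta : R) : \bar R :=
  (ereal_inf [set x | exists alpha beta d : R, (0 < d)%R /\ (0 < alpha)%R /\
      (alpha < expR (- d) * (1 - p))%R /\ (0 < beta)%R /\ (beta < expR (- d))%R /\
      x = dd_obj p theta alpha beta d]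
   * (k%:R * ln (n%:R / k%:R))%:E)%E.

End Defs.

From Pilot Require Import Defs.
From HB Require Import structures.
From mathcomp Require Import all_boot all_order all_algebra.
From mathcomp Require Import all_classical all_reals all_analysis.
From mathcomp Require Import lra ring.
Import Order.TTheory GRing.Theory Num.Theory.
Set Implicit Arguments.
Unset Strict Implicit.

Local Open Scope ring_scope.

(* Take beta = alpha in the DD program.  With s = e^{-d}(1-p) = 1 - w, every
   term of the DD objective is then dominated by the second COMP term
   1/((1-theta) d D(alpha||s)): c1 vanishes because D(alpha||0) = +oo, c2 is
   1/(d D(alpha||s)) itself, c3 uses that D(alpha||.) increases on
   [alpha, 1) and s <= e^{-d}, and c4 uses
   D(z||w) >= D(1-alpha||w) = D(alpha||s), since D(.||w) increases on [w, 1]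
   and z >= 1 - alpha >= w. *)

Section KullbackLeibler.
Variable R : realType.
Implicit Types a b c r s x : R.

Lemma ln_ge1Bv x : 0 < x -> 1 - x^-1 <= ln x.
Proof.
move=> x0; have := @le_ln1Dx R (x^-1 - 1).
have : 0 < x^-1 by rewrite invr_gt0.
rewrite subrKC lnV ?posrE //; lra.
Qed.

Lemma mulr_ln_div_ge a b : 0 <= a -> 0 < b -> a - b <= a * ln (a / b).
Proof.
move=> a0 b0; have [->|a_neq0] := eqVneq a 0; first by rewrite mul0r; lra.
have ap : 0 < a by rewrite lt_def a_neq0 a0.
have := ler_wpM2l a0 (ln_ge1Bv (divr_gt0 ap b0)).
by rewrite invf_div mulrBr mulr1 mulrCA divff ?mulr1.
Qed.

Lemma mulr_ln_div_split a b c : 0 <= a -> 0 < b -> 0 < c ->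
  a * ln (a / b) = a * ln (a / c) + a * ln (c / b).
Proof.
move=> a0 b0 c0; have [->|a_neq0] := eqVneq a 0; first by rewrite !mul0r addr0.
have ap : 0 < a by rewrite lt_def a_neq0 a0.
by rewrite -mulrDr !ln_div ?posrE // addrA subrK.
Qed.

Lemma xlogxyE a b : 0 < b -> xlogxy a b = (a * ln (a / b))%:E.
Proof.
move=> b0; rewrite /xlogxy; case: eqP => [->|_]; first by rewrite mul0r.
by rewrite gt_eqF.
Qed.

Lemma xlogxy_ge a b : 0 <= a -> 0 <= b -> ((a - b)%:E <= xlogxy a b)%E.
Proof.
move=> a0 b0; have [->|b_neq0] := eqVneq b 0.
  by rewrite /xlogxy eqxx; case: eqP => [->|_]; rewrite ?subr0 ?leey.
have bp : 0 < b by rewrite lt_def b_neq0 b0.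
by rewrite xlogxyE // lee_fin mulr_ln_div_ge.
Qed.

Lemma DKL_ge0 r s : (0 <= DKL r s)%E.
Proof.
rewrite /DKL; case: ifP => [/andP[/andP[r0 r1] /andP[s0 s1]]|_]; last by rewrite leey.
apply: le_trans (leeD (xlogxy_ge r0 s0) (xlogxy_ge _ _)); rewrite ?subr_ge0 //.
by rewrite -EFinD lee_fin; lra.
Qed.

Lemma DKLE r s : 0 <= r <= 1 -> 0 < s < 1 ->
  DKL r s = (r * ln (r / s) + (1 - r) * ln ((1 - r) / (1 - s)))%:E.
Proof.
move=> /andP[r0 r1] /andP[s0 s1]; rewrite /DKL r0 r1 ltW // ltW //=.
by rewrite !xlogxyE ?subr_gt0.
Qed.

Lemma DKLC r s : DKL (1 - r) (1 - s) = DKL r s.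
Proof.
have bounds x : (0 <= 1 - x <= 1) = (0 <= x <= 1).
  by apply/idP/idP => /andP[h1 h2]; apply/andP; split; lra.
by rewrite /DKL !bounds !opprB !subrKC addeC.
Qed.

Lemma DKLr0 r : 0 < r <= 1 -> DKL r 0 = +oo%E.
Proof.
move=> /andP[r0 r1]; rewrite /DKL ltW // r1 lexx ler01 /=.
by rewrite /xlogxy gt_eqF // eqxx subr0 oner_eq0; case: eqP.
Qed.

(* The lower bound on the increment is (s2 - s1)(s1 - r) / (s1 (1 - s1)). *)
Lemma le_DKL_right r s1 s2 : 0 <= r -> r <= s1 -> 0 < s1 -> s1 <= s2 -> s2 < 1 ->
  (DKL r s1 <= DKL r s2)%E.
Proof.
move=> r0 rs1 s10 s12 s21.
rewrite !DKLE; try (apply/andP; lra); rewrite lee_fin.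
rewrite (@mulr_ln_div_split r s2 s1) ?(@mulr_ln_div_split (1 - r) (1 - s2) (1 - s1));
  try lra.
have h1 := ler_wpM2l r0 (ln_ge1Bv (divr_gt0 s10 (lt_le_trans s10 s12))).
have h2 : (1 - r) * (1 - ((1 - s1) / (1 - s2))^-1) <=
          (1 - r) * ln ((1 - s1) / (1 - s2)).
  by apply: ler_wpM2l; [lra | apply: ln_ge1Bv; apply: divr_gt0; lra].
rewrite !invf_div in h1 h2.
set u := s2 / s1 in h1; set v := (1 - s2) / (1 - s1) in h2.
have eu : s1 * u = s2 by rewrite /u mulrCA divff ?mulr1 //; lra.
have ev : (1 - s1) * v = 1 - s2 by rewrite /v mulrCA divff ?mulr1 //; lra.
have v_le1 : v <= 1 by nra.
have u_ge_v : 0 <= u - v.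
  have E : s1 * (u - v) = 1 - v by lra.
  by rewrite -(pmulr_rge0 _ s10) E; lra.
have : 0 <= (s1 - r) * (u - v) by apply: mulr_ge0; lra.
nra.
Qed.

Lemma le_DKL_left s r1 r2 : 0 < s < 1 -> s <= r1 -> r1 <= r2 -> r2 <= 1 ->
  (DKL r1 s <= DKL r2 s)%E.
Proof.
move=> s_bd sr1 r12 r21; have /andP[s0 s1] := s_bd.
have [<-|r1_neq_r2] := eqVneq r1 r2; first by [].
rewrite !DKLE //; try (apply/andP; lra); rewrite lee_fin.
have r10 : 0 < r1 by lra.
have r1_lt_r2 : r1 < r2 by rewrite lt_neqAle r1_neq_r2 r12.
have r11 : 0 < 1 - r1 by lra.
rewrite (@mulr_ln_div_split r2 s r1) ?(@mulr_ln_div_split (1 - r2) (1 - s) (1 - r1));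
  try lra.
have h1 := mulr_ln_div_ge (ltW (lt_le_trans r10 r12)) r10.
have h2 : (1 - r2) - (1 - r1) <= (1 - r2) * ln ((1 - r2) / (1 - r1)).
  by apply: mulr_ln_div_ge; lra.
have A0 : 0 <= ln (r1 / s) by apply: ln_ge0; rewrite ler_pdivlMr // mul1r.
have B0 : ln ((1 - r1) / (1 - s)) <= 0.
  by apply: ln_le0; rewrite ler_pdivrMr ?subr_gt0 // mul1r; lra.
nra.
Qed.

Lemma erecip_ge0 (x : \bar R) : (0 <= x)%E -> (0 <= erecip x)%E.
Proof.
case: x => [r| |] //=; rewrite lee_fin => r0; case: eqP => _ //.
by rewrite lee_fin invr_ge0.
Qed.

Lemma erecip_le (x y : \bar R) : (0 <= x)%E -> (x <= y)%E ->
  (erecip y <= erecip x)%E.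
Proof.
case: x => [r| |] //=; last by move=> _; rewrite leye_eq => /eqP ->.
rewrite lee_fin => r0; case: eqP => [_ _|/eqP r_neq0]; first by rewrite leey.
have rp : 0 < r by rewrite lt_def r_neq0 r0.
case: y => [t| |] //=; rewrite ?lee_fin => rt; last by rewrite invr_ge0.
by rewrite gt_eqF ?(lt_le_trans rp rt) // lee_fin lef_pV2 ?posrE ?(lt_le_trans rp rt).
Qed.

End KullbackLeibler.

Lemma wDD_compl (R : realType) (p d : R) : 1 - wDD p d = expR (- d) * (1 - p).
Proof. rewrite /wDD; ring. Qed.

Section Domination.
Variables (R : realType) (p theta alpha d : R).
Hypotheses (p0 : 0 < p) (p1 : p < 1) (theta0 : 0 < theta) (theta1 : theta < 1).
Hypotheses (d0 : 0 < d) (alpha0 : 0 < alpha) (alpha_s : alpha < expR (- d) * (1 - p)).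

Let s := expR (- d) * (1 - p).
Let comp_bound := ((1 / (1 - theta))%:E * erecip (d%:E * DKL alpha s))%E.

Let e0 : 0 < expR (- d). Proof. exact: expR_gt0. Qed.
Let e1 : expR (- d) < 1. Proof. by rewrite expR_lt1 oppr_lt0. Qed.
Let s0 : 0 < s. Proof. by rewrite mulr_gt0 // subr_gt0. Qed.
Let s_le_e : s <= expR (- d). Proof. by rewrite /s ler_piMr ?(ltW e0) // gerBl ltW. Qed.
Let s_lt1 : s < 1. Proof. exact: le_lt_trans s_le_e e1. Qed.
Let alpha_lt1 : alpha < 1. Proof. exact: lt_trans alpha_s s_lt1. Qed.
Let d_ge0 : (0 <= d%:E :> \bar R)%E. Proof. by rewrite lee_fin ltW. Qed.
Let inv1Btheta_gt0 : 0 < 1 / (1 - theta). Proof. by rewrite divr_gt0 // subr_gt0. Qed.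

Let rate_le (D : \bar R) : (DKL alpha s <= D)%E ->
  (erecip (d%:E * D) <= erecip (d%:E * DKL alpha s))%E.
Proof. by move=> le_D; rewrite erecip_le ?mule_ge0 ?DKL_ge0 ?lee_wpmul2l. Qed.

Let comp_bound_ge0 : (0 <= comp_bound)%E.
Proof. by rewrite mule_ge0 ?erecip_ge0 ?mule_ge0 ?DKL_ge0 ?lee_fin ?ltW. Qed.

Lemma c1_le_comp_bound : (c1 theta alpha d <= comp_bound)%E.
Proof.
by rewrite /c1 DKLr0 ?alpha0 ?(ltW alpha_lt1) // gt0_muley ?lte_fin //= mule0.
Qed.

Lemma c2_le_comp_bound : (c2 p alpha d <= comp_bound)%E.
Proof.
rewrite /c2 wDD_compl -/s lee_pemull ?lee_fin //.
  by rewrite erecip_ge0 // mule_ge0 ?DKL_ge0.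
by rewrite ler_pdivlMr ?mul1r ?gerBl ?subr_gt0 ?ltW.
Qed.

Lemma c3_le_comp_bound : (c3 theta alpha d <= comp_bound)%E.
Proof.
apply: lee_pmul; rewrite ?erecip_ge0 ?mule_ge0 ?DKL_ge0 ?lee_fin //.
- by rewrite divr_ge0 ?subr_ge0 // ltW.
- by rewrite ler_pM2r ?invr_gt0 ?subr_gt0 // ltW.
- by rewrite rate_le // le_DKL_right ?(ltW alpha0) ?(ltW alpha_s).
Qed.

Lemma c4_le_comp_bound beta : (c4 p theta alpha beta d <= comp_bound)%E.
Proof.
rewrite /c4; apply: ge_ereal_sup => _ [z [/andP[z_ge z1] ->]].
apply: lee_wpmul2l; first by rewrite lee_fin ltW.
apply: rate_le; apply: le_trans (leeDl _ _); last first.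
  rewrite mule_ge0 ?DKL_ge0 // lee_fin mulr_ge0 //; first by rewrite /Defs.indic; case: ifP.
  by apply: le_trans z_ge; rewrite subr_ge0 ltW.
have w_eq : wDD p d = 1 - s by rewrite /s -wDD_compl opprB subrKC.
rewrite w_eq -DKLC le_DKL_left //.
- by rewrite subr_gt0 s_lt1 ltrBlDr ltrDl s0.
- by rewrite lerD2l lerN2 ltW.
Qed.

Lemma dd_obj_le_comp_obj : (dd_obj p theta alpha alpha d <= comp_obj p theta alpha d)%E.
Proof.
rewrite /comp_obj le_max -/s -/comp_bound orbC /dd_obj !ge_max.
by rewrite c1_le_comp_bound c2_le_comp_bound c3_le_comp_bound c4_le_comp_bound.
Qed.

End Domination.

Theorem corollary2p14 (R : realType) (n k : nat) (p theta : R) :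
  (0 < k)%N -> (k < n)%N ->
  0 < p < 1 -> 0 < theta < 1 ->
  (m_DD n k p theta <= m_COMP n k p theta)%E.
Proof.
move=> k0 kn /andP[p0 p1] /andP[theta0 theta1].
have scale_ge0 : (0 <= (k%:R * ln (n%:R / k%:R))%:E :> \bar R)%E.
  rewrite lee_fin mulr_ge0 ?ler0n // ln_ge0 //.
  by rewrite ler_pdivlMr ?ltr0n // mul1r ler_nat ltnW.
rewrite /m_DD /m_COMP lee_wpmul2r //.
apply: le_ereal_inf_tmp => _ [alpha [d [d0 [alpha0 [alpha_s ->]]]]].
apply: le_trans (dd_obj_le_comp_obj p0 p1 theta0 theta1 d0 alpha0 alpha_s).
apply: ereal_inf_lbound; exists alpha, alpha, d; do 5 (split => //).
by apply: lt_le_trans alpha_s _; rewrite ler_piMr ?expR_ge0 //; lra.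
Qed.
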